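(* Let $G$ be a finite group and $H$ a proper subgroup with $[G:H] \geq 3$. There is a one-to-one correspondence between simple rank $3$ $G$-invariant matroids whose ground $G$-set is $G/H$ and nontrivial equivalence relations $\sim$ on $G/H - \{\bar{1}\}$ satisfying: (1) if $\bar{a} \sim \bar{b}$ and $\bar{a} \neq \bar{b}$, then $\overline{a^{-1}} \sim \overline{a^{-1}b}$; (2) if $\bar{a} \sim \bar{b}$ and $h \in H$, then $\overline{ha} \sim \overline{hb}$.
   Context: $G/H$ is the set of left cosets with $G$ acting by left multiplication, and $\bar{a}$ denotes $aH$. A matroid on a $G$-set is $G$-invariant if $gB$ is a basis for every basis $B$ and $g \in G$. A matroid is simple if every circuit has at least three elements. An equivalence relation is nontrivial if it has at least two classes. *)

From mathcomp Require Import all_boot all_fingroup.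
Set Implicit Arguments. Unset Strict Implicit. Unset Printing Implicit Defensive.
Local Open Scope group_scope.

Section Matroid.
Variable T : finType.

Definition is_matroid_bases (E : {set T}) (Bs : {set {set T}}) : Prop :=
  [/\ Bs != set0,
      forall B, B \in Bs -> B \subset E &
      forall B1 B2, B1 \in Bs -> B2 \in Bs -> forall x, x \in B1 :\: B2 ->
        exists2 y, y \in B2 :\: B1 & (y |: (B1 :\ x)) \in Bs].

Definition m_indep (Bs : {set {set T}}) (I : {set T}) : Prop :=
  exists2 B, B \in Bs & I \subset B.

Definition m_circuit (E : {set T}) (Bs : {set {set T}}) (C : {set T}) : Prop :=
  [/\ C \subset E, ~ m_indep Bs C &
      forall D : {set T}, D \proper C -> m_indep Bs D].

Definition m_simple (E : {set T}) (Bs : {set {set T}}) : Prop :=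
  forall C, m_circuit E Bs C -> 3 <= #|C|.

Definition m_rank_is (Bs : {set {set T}}) (r : nat) : Prop :=
  forall B, B \in Bs -> #|B| = r.
End Matroid.

Section Cosets.
Variable gT : finGroupType.
Implicit Types G H : {group gT}.

(** ground G-set G/H: left cosets aH, with G acting by left multiplication *)
Definition ground G H : {set {set gT}} := lcosets H G.

Definition act_set (g : gT) (S : {set {set gT}}) : {set {set gT}} :=
  [set g *: C | C in S].

Definition G_invariant G (Bs : {set {set {set gT}}}) : Prop :=
  forall g B, g \in G -> B \in Bs -> act_set g B \in Bs.

Definition simple_rank3_invariant_matroid G H (Bs : {set {set {set gT}}}) : Prop :=
  [/\ is_matroid_bases (ground G H) Bs, m_rank_is Bs 3, m_simple (ground G H) Bs
    & G_invariant G Bs].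

Definition punctured G H : {set {set gT}} := ground G H :\ (H : {set gT}).

Definition equiv_on (D : {set {set gT}}) (R : {set {set gT} * {set gT}}) : Prop :=
  [/\ R \subset setX D D,
      forall x, x \in D -> (x, x) \in R,
      forall x y, (x, y) \in R -> (y, x) \in R &
      forall x y z, (x, y) \in R -> (y, z) \in R -> (x, z) \in R].

Definition nontrivial_equiv (D : {set {set gT}}) (R : {set {set gT} * {set gT}}) : Prop :=
  2 <= #|[set [set y in D | (x, y) \in R] | x in D]|.

Definition admissible_relation G H (R : {set {set gT} * {set gT}}) : Prop :=
  [/\ equiv_on (punctured G H) R,
      nontrivial_equiv (punctured G H) R,
      forall a b, a \in G -> b \in G ->
        (a *: H, b *: H) \in R -> a *: H != b *: H ->
        (a^-1 *: H, (a^-1 * b) *: H) \in R &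
      forall a b h, a \in G -> b \in G -> h \in H ->
        (a *: H, b *: H) \in R -> ((h * a) *: H, (h * b) *: H) \in R].
End Cosets.

From mathcomp Require Import all_boot all_fingroup.
Set Implicit Arguments. Unset Strict Implicit. Unset Printing Implicit Defensive.
Local Open Scope group_scope.

(* A simple rank-3 matroid is determined by its lines, and the lines through a
   point p partition the other points: if {p, x, y} and {p, y, z} are not bases,
   neither is {p, x, z}, by exchange against a basis through p and y.  For a
   G-invariant matroid on G/H, the partition by lines through the base coset H
   is the relation ~; translating by a^-1, resp. by h in H (which fixes H),
   gives conditions (1) and (2).
   Conversely, ~ declares three cosets collinear when, after translating the
   first one to H, the other two become equivalent.  Condition (2) makes this
   independent of the translation; symmetry, (1) and transitivity of ~ make
   collinearity symmetric with closed lines.  The non-collinear triples are then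
   the bases of a simple rank-3 matroid (nonempty because ~ is nontrivial,
   exchange because a basis none of whose points completes {p, q} to a basis
   lies on the line pq), and they are G-invariant by construction. *)

Section ThreeSets.
Variable T : finType.
Implicit Types (x y z : T) (S : {set T}).

Lemma set3P x y z t :
  reflect [\/ t = x, t = y | t = z] (t \in [set x; y; z]).
Proof.
rewrite !inE -orbA; apply: (iffP or3P) => -[];
  by [move/eqP->; constructor | move->; rewrite eqxx; constructor].
Qed.

Lemma set3_mem x y z :
  [/\ x \in [set x; y; z], y \in [set x; y; z] & z \in [set x; y; z]].
Proof. by rewrite !inE !eqxx !orbT. Qed.

Lemma set3C12 x y z : [set x; y; z] = [set y; x; z].
Proof. by apply/setP=> t; rewrite !inE (orbC (t == x)). Qed.

Lemma set3C23 x y z : [set x; y; z] = [set x; z; y].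
Proof. by apply/setP=> t; rewrite !inE -!orbA (orbC (t == y)). Qed.

Lemma setU1_set2 x y z : x |: [set y; z] = [set x; y; z].
Proof. by apply/setP=> t; rewrite !inE orbA. Qed.

Lemma cards3 x y z : x != y -> x != z -> y != z -> #|[set x; y; z]| = 3.
Proof.
by move=> xy xz yz; rewrite -setU1_set2 cardsU1 cards2 !inE negb_or xy xz yz.
Qed.

Lemma cards3_pivot S x : #|S| = 3 -> x \in S ->
  exists y z, [/\ x != y, x != z, y != z & S = [set x; y; z]].
Proof.
move=> S3 xS; have /cards2P[y [z [yz Sx]]] : #|S :\ x| == 2.
  by move: S3; rewrite (cardsD1 x S) xS add1n => -[->].
have /setD1P[yx _] : y \in S :\ x by rewrite Sx !inE eqxx.
have /setD1P[zx _] : z \in S :\ x by rewrite Sx !inE eqxx orbT.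
exists y, z; split; rewrite 1?[x == _]eq_sym //.
by rewrite -setU1_set2 -Sx setD1K.
Qed.

Lemma cards3P S : #|S| = 3 ->
  exists x y z, [/\ x != y, x != z, y != z & S = [set x; y; z]].
Proof.
move=> S3; have /set0Pn[x xS] : S != set0 by rewrite -card_gt0 S3.
by exists x; apply: cards3_pivot.
Qed.

End ThreeSets.

Section Independence.
Variables (T : finType) (E : {set T}) (Bs : {set {set T}}).

Lemma m_indepP (I : {set T}) : reflect (m_indep Bs I) [exists B in Bs, I \subset B].
Proof. exact: exists_inP. Qed.

Lemma m_indepS (I J : {set T}) : I \subset J -> m_indep Bs J -> m_indep Bs I.
Proof. by move=> sIJ [B BBs sJB]; exists B; last exact: subset_trans sJB. Qed.

Lemma indep_pairs_simple : Bs != set0 ->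
  (forall a b, a \in E -> b \in E -> m_indep Bs [set a; b]) -> m_simple E Bs.
Proof.
move=> /set0Pn[B0 B0in] pairs C [sCE dep _]; rewrite leqNgt; apply/negP => C_small.
apply: dep; move: sCE C_small; case: cards_eqP => -[|x [|y []]] //= _ sCE _.
- by exists B0; rewrite // sub0set.
- have xE : x \in E by apply: (subsetP sCE); rewrite inE mem_seq1.
  by apply: m_indepS (pairs x x xE xE); apply/subsetP => t; rewrite !inE => ->.
have [xE yE] : x \in E /\ y \in E by split; apply: (subsetP sCE); rewrite !inE eqxx ?orbT.
by apply: m_indepS (pairs x y xE yE); apply/subsetP => t; rewrite !inE.
Qed.

Hypothesis simple : m_simple E Bs.

Lemma simple_indep_card_le2 (C : {set T}) : C \subset E -> #|C| <= 2 -> m_indep Bs C.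
Proof.
elim: {C}#|C|.+1 {-2}C (ltnSn #|C|) => // n IH C ltCn sCE leC2.
case: (m_indepP C) => // dep.
have: 3 <= #|C|; last by rewrite leqNgt ltnS leC2.
apply: simple; split=> // D ltDC; have ltDC' := proper_card ltDC.
apply: IH; first exact: leq_trans ltDC' _.
  exact: subset_trans (proper_sub ltDC) sCE.
exact: leq_trans (ltnW ltDC') leC2.
Qed.

End Independence.

Section SimpleRank3.
Variables (T : finType) (E : {set T}) (Bs : {set {set T}}).
Hypotheses (bases : is_matroid_bases E Bs) (rank3 : m_rank_is Bs 3).
Hypothesis simple : m_simple E Bs.

Lemma rank3_nonbasis_trans p x y z :
  p \in E -> y \in E -> p != y ->
  [set p; x; y] \notin Bs -> [set p; y; z] \notin Bs -> [set p; x; z] \notin Bs.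
Proof.
move=> pE yE py pxy pyz; apply/negP => pxz.
have [B2 B2in sB2] : m_indep Bs [set p; y].
  apply: (simple_indep_card_le2 simple); last by rewrite cards2 py.
  by apply/subsetP => t /set2P[]->.
have [pB2 yB2] : p \in B2 /\ y \in B2.
  by split; apply: (subsetP sB2); rewrite !inE eqxx ?orbT.
have [e [ep ey eB2]] : exists e, [/\ e != p, e != y & B2 = [set p; y; e]].
  have [u [v [pu pv uv eB2]]] := cards3_pivot (rank3 B2in) pB2.
  move: yB2; rewrite eB2 => /set3P[yp | -> | ->]; first by rewrite yp eqxx in py.
    by exists v; rewrite eq_sym pv eq_sym.
  by exists u; rewrite set3C23 eq_sym pu.
have [_ _ exchange] := bases.
have ex : e != x by apply: contraNneq pxy => <-; rewrite set3C23 -eB2.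
have ez : e != z by apply: contraNneq pyz => <-; rewrite -eB2.
have eB2x : e \in B2 :\: [set p; x; z].
  by rewrite eB2 !inE eqxx orbT andbT !negb_or ep ex ez.
have [w] := exchange _ _ B2in pxz e eB2x.
have -> : B2 :\ e = [set p; y].
  apply/setP => t; rewrite eB2 !inE.
  by have [->|] := eqVneq t e; rewrite ?orbF // (negbTE ep) (negbTE ey).
rewrite inE setU1_set2 eB2 !inE => /andP[/norP[/norP[wp _] _]].
rewrite (negbTE wp) /= => /orP[] /eqP ->; rewrite set3C12; first exact/negP.
by rewrite set3C23; exact/negP.
Qed.

End SimpleRank3.

Section CollinearityMatroid.
Variables (T : finType) (E : {set T}) (col : T -> T -> T -> bool).
Hypothesis col_swap12 : forall x y z, x \in E -> y \in E -> z \in E -> y != z ->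
  col x y z -> col y x z.
Hypothesis col_swap23 : forall x y z, col x y z -> col x z y.
Hypothesis col_trans : forall a b c d, col a b c -> col a b d -> col a c d.

Definition collinear (S : {set T}) : Prop :=
  forall x y z, x \in S -> y \in S -> z \in S -> x != y -> x != z -> y != z -> col x y z.

Definition line p q : {set T} := [set s in E | [|| s == p, s == q | col p q s]].

Definition triangles : {set {set T}} :=
  [set S : {set T} | [&& S \subset E, #|S| == 3 &
     [forall x in S, forall y in S, forall z in S,
        [&& x != y, x != z & y != z] ==> ~~ col x y z]]].

Lemma collinear3 x y z : x \in E -> y \in E -> z \in E ->
  x != y -> x != z -> y != z -> col x y z -> collinear [set x; y; z].
Proof.
move=> xE yE zE xy xz yz c_xyz; have zy : z != y by rewrite eq_sym.
have c_xzy := col_swap23 c_xyz.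
have c_yxz := col_swap12 xE yE zE yz c_xyz; have c_yzx := col_swap23 c_yxz.
have c_zxy := col_swap12 xE zE yE zy c_xzy; have c_zyx := col_swap23 c_zxy.
by move=> u v w /set3P[]-> /set3P[]-> /set3P[]->; rewrite ?eqxx.
Qed.

Lemma line_pivot p q s t : p \in E -> q \in E -> p != q ->
  s \in line p q -> t \in line p q -> s != p -> t != p -> s != t -> col p s t.
Proof.
move=> pE qE pq; rewrite !inE => /andP[sE s_on] /andP[tE t_on] sp tp st.
case/or3P: s_on => [/eqP sp' | /eqP sq | c_pqs]; first by rewrite sp' eqxx in sp.
  rewrite sq in st *.
  case/or3P: t_on => [/eqP tp' | /eqP tq | //]; first by rewrite tp' eqxx in tp.
  by rewrite tq eqxx in st.
case/or3P: t_on => [/eqP tp' | /eqP tq | c_pqt]; first by rewrite tp' eqxx in tp.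
  rewrite tq in st *; have ps : p != s by rewrite eq_sym.
  have qs : q != s by rewrite eq_sym.
  by apply: (collinear3 pE qE sE pq ps qs c_pqs); rewrite ?inE ?eqxx ?orbT.
exact: col_trans c_pqs c_pqt.
Qed.

Lemma collinear_line p q : p \in E -> q \in E -> p != q -> collinear (line p q).
Proof.
move=> pE qE pq u v w uL vL wL; have pivot := line_pivot pE qE pq.
have [[uE _] [vE _]] := (setIdP uL, setIdP vL); have [wE _] := setIdP wL.
have [-> | up] := eqVneq u p; first by move=> pv pw vw; apply: pivot; rewrite // eq_sym.
have [-> | vp] := eqVneq v p.
  by move=> _ uw pw; apply: (col_swap12 pE uE wE uw); apply: pivot; rewrite // eq_sym.
have [-> | wp] := eqVneq w p.
  by move=> uv _ _; apply/col_swap23/(col_swap12 pE uE vE uv); apply: pivot.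
move=> uv uw vw; apply: (@col_trans _ p).
  by apply: (col_swap12 pE uE vE uv); apply: pivot.
by apply: (col_swap12 pE uE wE uw); apply: pivot.
Qed.

Lemma triangle_subset S : S \in triangles -> S \subset E.
Proof. by rewrite inE => /and3P[]. Qed.

Lemma triangle_card S : S \in triangles -> #|S| = 3.
Proof. by rewrite inE => /and3P[_ /eqP]. Qed.

Lemma trianglesE x y z : x \in E -> y \in E -> z \in E ->
  x != y -> x != z -> y != z -> ([set x; y; z] \in triangles) = ~~ col x y z.
Proof.
move=> xE yE zE xy xz yz; have [xS yS zS] := set3_mem x y z.
rewrite inE cards3 // eqxx /=; apply/andP/idP => [[_ /forall_inP noncol] | nc_xyz].
  by have /forall_inP/(_ _ yS)/forall_inP/(_ _ zS) := noncol x xS; rewrite xy xz yz.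
split; first by apply/subsetP => t /set3P[]->.
apply/forall_inP => u uS; apply/forall_inP => v vS; apply/forall_inP => w wS.
apply/implyP => /and3P[uv uw vw]; apply: contra nc_xyz => c_uvw.
have sE : [set x; y; z] \subset E by apply/subsetP => t /set3P[]->.
have eS : [set u; v; w] = [set x; y; z].
  apply/eqP; rewrite eqEcard cards3 // cards3 // leqnn andbT.
  by apply/subsetP => t /set3P[]->.
have [uE vE wE] : [/\ u \in E, v \in E & w \in E] by split; apply: (subsetP sE).
by apply: (collinear3 uE vE wE uv uw vw c_uvw); rewrite ?eS ?inE ?eqxx ?orbT.
Qed.

Lemma triangle_pivot S x : S \in triangles -> x \in S ->
  exists y z, [/\ x != y, x != z, y != z, S = [set x; y; z] & ~~ col x y z].
Proof.
move=> St xS; have [y [z [xy xz yz eS]]] := cards3_pivot (triangle_card St) xS.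
have sE := subsetP (triangle_subset St); rewrite eS in sE St.
by exists y, z; split; rewrite // -trianglesE // sE // !inE eqxx ?orbT.
Qed.

Lemma triangleP S : S \in triangles ->
  exists x y z, [/\ x != y, x != z, y != z, S = [set x; y; z] & ~~ col x y z].
Proof.
move=> St; have /set0Pn[x xS] : S != set0 by rewrite -card_gt0 triangle_card.
by exists x; apply: triangle_pivot.
Qed.

Lemma triangle_not_sub_line p q S : p \in E -> q \in E -> p != q ->
  S \in triangles -> ~~ (S \subset line p q).
Proof.
move=> pE qE pq St; apply/negP => sSL.
have [x [y [z [xy xz yz eS nc_xyz]]]] := triangleP St.
have inL t : t \in [set x; y; z] -> t \in line p q by rewrite -eS => /(subsetP sSL).
by rewrite (collinear_line pE qE pq) ?inL ?inE ?eqxx ?orbT in nc_xyz.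
Qed.

Lemma line_of_nontriangle p q s : p \in E -> q \in E -> s \in E ->
  p != q -> p != s -> q != s -> [set p; q; s] \notin triangles -> s \in line p q.
Proof.
by move=> pE qE sE pq ps qs; rewrite trianglesE // negbK !inE sE => ->; rewrite !orbT.
Qed.

Lemma triangles_exchange B1 B2 x : B1 \in triangles -> B2 \in triangles ->
  x \in B1 :\: B2 -> exists2 y, y \in B2 :\: B1 & y |: (B1 :\ x) \in triangles.
Proof.
move=> B1t B2t /setDP[xB1 xB2].
have [p [q [xp xq pq eB1 _]]] := triangle_pivot B1t xB1.
have [pE qE] : p \in E /\ q \in E.
  by split; apply: (subsetP (triangle_subset B1t)); rewrite eB1 !inE eqxx ?orbT.
have -> : B1 :\ x = [set p; q].
  apply/setP => t; rewrite eB1 !inE.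
  by have [->|] := eqVneq t x; rewrite ?(negbTE xp) ?(negbTE xq).
apply/exists_inP; apply: contraNT (triangle_not_sub_line pE qE pq B2t).
move=> /exists_inPn no_y; apply/subsetP => s sB2.
have sE : s \in E := subsetP (triangle_subset B2t) s sB2.
have [-> | sp] := eqVneq s p; first by rewrite !inE pE eqxx.
have [-> | sq] := eqVneq s q; first by rewrite !inE qE eqxx orbT.
have sB1 : s \notin B1.
  by rewrite eB1 !inE (negbTE sp) (negbTE sq) !orbF; apply: contraNneq xB2 => <-.
have := no_y s; rewrite inE sB1 sB2 setU1_set2 set3C12 set3C23 => /(_ isT).
by apply: line_of_nontriangle; rewrite // eq_sym.
Qed.

Lemma triangle_through_pair a b : triangles != set0 -> a \in E -> b \in E -> a != b ->
  exists c, [set a; b; c] \in triangles.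
Proof.
move=> /set0Pn[B Bt] aE bE ab; apply/existsP.
apply: contraNT (triangle_not_sub_line aE bE ab Bt) => /existsPn no_c.
apply/subsetP => s sB; have sE : s \in E := subsetP (triangle_subset Bt) s sB.
have [-> | sa] := eqVneq s a; first by rewrite !inE aE eqxx.
have [-> | sb] := eqVneq s b; first by rewrite !inE bE eqxx orbT.
by apply: line_of_nontriangle (no_c s); rewrite // eq_sym.
Qed.

Lemma triangles_indep_pair a b : triangles != set0 -> a \in E -> b \in E ->
  m_indep triangles [set a; b].
Proof.
move=> tne aE bE; wlog ab : b bE / a != b => [indep_ab|].
  have [<- | ] := eqVneq a b; last exact: indep_ab.
  have /set0Pn[B Bt] := tne.
  have /card_gt1P[u [v [uB vB uv]]] : 1 < #|B| by rewrite (triangle_card Bt).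
  have [c cB ca] : exists2 c, c \in B & c != a.
    by have [ua | ] := eqVneq u a; [exists v; rewrite // -ua eq_sym | exists u].
  apply: m_indepS (indep_ab c _ _); first by apply/subsetP => t; rewrite !inE orbb => ->.
    exact: (subsetP (triangle_subset Bt)).
  by rewrite eq_sym.
have [c abc] := triangle_through_pair tne aE bE ab.
by exists [set a; b; c]; last by apply/subsetP => t; rewrite !inE => ->.
Qed.

Lemma triangles_matroid : triangles != set0 ->
  [/\ is_matroid_bases E triangles, m_rank_is triangles 3 & m_simple E triangles].
Proof.
move=> tne; split.
- split=> //; first exact: triangle_subset.
  by move=> B1 B2 B1t B2t x; exact: triangles_exchange.
- exact: triangle_card.
- by apply: indep_pairs_simple => // a b; exact: triangles_indep_pair.
Qed.

End CollinearityMatroid.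

Lemma nontrivial_equivP (gT : finGroupType) (D : {set {set gT}}) R : equiv_on D R ->
  nontrivial_equiv D R <-> exists a b, [/\ a \in D, b \in D & (a, b) \notin R].
Proof.
move=> [_ Rrefl Rsym Rtrans]; split.
  case/card_gt1P => _ [_ [/imsetP[a aD ->] /imsetP[b bD ->] ne_ab]].
  exists a, b; split=> //; apply: contra ne_ab => Rab; apply/eqP/setP => t.
  rewrite !inE; apply: andb_id2l => _.
  by apply/idP/idP; [apply: Rtrans (Rsym _ _ Rab) | apply: Rtrans Rab].
move=> [a [b [aD bD nRab]]]; apply/card_gt1P.
exists [set y in D | (a, y) \in R], [set y in D | (b, y) \in R].
split; try exact: imset_f.
apply: contraNneq nRab => same_class.
have : b \in [set y in D | (b, y) \in R] by rewrite inE bD Rrefl.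
by rewrite -same_class inE => /andP[].
Qed.

Section CosetAction.
Variables (gT : finGroupType) (G H : {group gT}).

Lemma ground_base : (H : {set gT}) \in ground G H.
Proof. by apply/lcosetsP; exists 1; rewrite ?group1 ?lcoset1. Qed.

Lemma ground_act g x : g \in G -> x \in ground G H -> g *: x \in ground G H.
Proof.
by move=> gG /lcosetsP[k kG ->]; apply/lcosetsP; exists (g * k); rewrite ?groupM ?lcosetM.
Qed.

Lemma act_set3 (g : gT) x y z : act_set g [set x; y; z] = [set g *: x; g *: y; g *: z].
Proof. by rewrite /act_set !imsetU !imset_set1. Qed.

Lemma G_invariant_set3 Bs g x y z : G_invariant G Bs -> g \in G ->
  ([set g *: x; g *: y; g *: z] \in Bs) = ([set x; y; z] \in Bs).
Proof.
move=> invBs gG; rewrite -act_set3; apply/idP/idP => [|]; last exact: invBs.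
move/(invBs g^-1 _ (groupVr gG)); rewrite /act_set -imset_comp.
by rewrite (eq_imset _ (g := id)) ?imset_id // => C /=; exact: lcosetK.
Qed.

End CosetAction.

Section CosetCollinearity.
Variables (gT : finGroupType) (G H : {group gT}) (R : {set {set gT} * {set gT}}).
Hypothesis admR : admissible_relation G H R.

(* Quantifying over all representatives g of x is harmless: by condition (2) the
   test does not depend on the choice (admissible_rep). *)
Definition coset_col (x y z : {set gT}) : bool :=
  [forall g in G, (x == g *: H) ==> ((g^-1 *: y, g^-1 *: z) \in R)].

Lemma admissible_sub a b : (a, b) \in R -> a \in punctured G H /\ b \in punctured G H.
Proof.
by have [[/subsetP sRD _ _ _] _ _ _] := admR; move/sRD; rewrite in_setX => /andP.
Qed.

Lemma admissible_rep g k y z : g \in G -> k \in G -> g *: H = k *: H ->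
  (g^-1 *: y, g^-1 *: z) \in R -> (k^-1 *: y, k^-1 *: z) \in R.
Proof.
move=> gG kG eq_gk yz; have /lcosetP[h hH ->] : k \in g *: H by rewrite eq_gk lcoset_refl.
have [/setD1P[_ /lcosetsP[c cG ec]] /setD1P[_ /lcosetsP[d dG ed]]] := admissible_sub yz.
have [_ _ _ stabR] := admR.
rewrite invMg !lcosetM ec ed -!lcosetM.
by apply: stabR; rewrite ?groupV // -ec -ed.
Qed.

Lemma coset_colP x y z g : coset_col x y z -> g \in G -> x = g *: H ->
  (g^-1 *: y, g^-1 *: z) \in R.
Proof. by move=> /forall_inP/(_ g) + gG ex => /(_ gG); rewrite ex eqxx. Qed.

Lemma coset_colI x y z g : g \in G -> x = g *: H ->
  (g^-1 *: y, g^-1 *: z) \in R -> coset_col x y z.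
Proof.
move=> gG -> yz; apply/forall_inP => k kG; apply/implyP => /eqP e.
exact: admissible_rep gG kG e yz.
Qed.

Lemma coset_col_base a b : coset_col H a b = ((a, b) \in R).
Proof.
have H1 : (H : {set gT}) = 1 *: H by rewrite lcoset1.
apply/idP/idP => [/coset_colP/(_ (group1 G) H1) | ]; first by rewrite invg1 !lcoset1.
by move=> ab; apply: (coset_colI (group1 G) H1); rewrite invg1 !lcoset1.
Qed.

Lemma coset_col_swap23 x y z : coset_col x y z -> coset_col x z y.
Proof.
have [[_ _ Rsym _] _ _ _] := admR.
move=> c; apply/forall_inP => g gG; apply/implyP => /eqP e.
exact/Rsym/(coset_colP c gG e).
Qed.

Lemma coset_col_trans a b c d : coset_col a b c -> coset_col a b d -> coset_col a c d.
Proof.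
have [[_ _ Rsym Rtrans] _ _ _] := admR.
move=> c1 c2; apply/forall_inP => g gG; apply/implyP => /eqP e.
exact: Rtrans (Rsym _ _ (coset_colP c1 gG e)) (coset_colP c2 gG e).
Qed.

Lemma coset_col_swap12 x y z : x \in ground G H -> y \in ground G H ->
  z \in ground G H -> y != z -> coset_col x y z -> coset_col y x z.
Proof.
move=> /lcosetsP[g gG ex] /lcosetsP[c cG ey] /lcosetsP[d dG ez] yz c_xyz.
have [_ _ invR _] := admR.
have gVc := groupM (groupVr gG) cG; have gVd := groupM (groupVr gG) dG.
have ne : (g^-1 * c) *: H != (g^-1 * d) *: H.
  by rewrite !lcosetM; apply: contra yz => /eqP/lcoset_inj; rewrite ey ez => ->.
have c_gen := coset_colP c_xyz gG ex; rewrite ey ez -!lcosetM in c_gen.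
have := invR _ _ gVc gVd c_gen ne.
rewrite invMg invgK mulgA -(mulgA c^-1) mulgV mulg1 => Rinv.
by apply: (coset_colI cG ey); rewrite ex ez -!lcosetM.
Qed.

Lemma coset_col_act g x y z : g \in G -> x \in ground G H ->
  coset_col (g *: x) (g *: y) (g *: z) = coset_col x y z.
Proof.
suff act_col k u v w : k \in G -> u \in ground G H ->
    coset_col u v w -> coset_col (k *: u) (k *: v) (k *: w).
  move=> gG xX; apply/idP/idP; last exact: act_col.
  by move/(act_col _ _ _ _ (groupVr gG) (ground_act gG xX)); rewrite !lcosetK.
move=> kG /lcosetsP[c cG eu] c_uvw.
apply: (coset_colI (groupM kG cG)); first by rewrite eu lcosetM.
by rewrite invMg -!lcosetM -mulgA mulVg mulg1; apply: coset_colP c_uvw cG eu.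
Qed.

Definition coset_matroid : {set {set {set gT}}} := triangles (ground G H) coset_col.

Let coset_trianglesE := trianglesE coset_col_swap12 coset_col_swap23.

Lemma coset_matroid_base a b : a \in punctured G H -> b \in punctured G H ->
  a != b -> ([set (H : {set gT}); a; b] \in coset_matroid) = ((a, b) \notin R).
Proof.
move=> /setD1P[aH aX] /setD1P[bH bX] ab.
by rewrite coset_trianglesE ?ground_base ?coset_col_base // eq_sym.
Qed.

Lemma coset_matroid_neq0 : coset_matroid != set0.
Proof.
have [equivR ntR _ _] := admR; have [_ Rrefl _ _] := equivR.
have [a [b [aD bD nRab]]] := (nontrivial_equivP equivR).1 ntR.
have ab : a != b by apply: contraNneq nRab => ->; exact: Rrefl.
by apply/set0Pn; exists [set (H : {set gT}); a; b]; rewrite coset_matroid_base.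
Qed.

Lemma coset_matroid_invariant : G_invariant G coset_matroid.
Proof.
move=> g B gG Bt; have sBX := subsetP (triangle_subset Bt).
have [x [y [z [xy xz yz eB nc_xyz]]]] :=
  triangleP coset_col_swap12 coset_col_swap23 Bt.
have [xX yX zX] : [/\ x \in ground G H, y \in ground G H & z \in ground G H].
  by split; apply: sBX; rewrite eB !inE eqxx ?orbT.
have act_neq u v : u != v -> g *: u != g *: v by apply: contra => /eqP/lcoset_inj ->.
by rewrite eB act_set3 coset_trianglesE ?ground_act ?act_neq // coset_col_act.
Qed.

Lemma coset_matroid_valid : simple_rank3_invariant_matroid G H coset_matroid.
Proof.
have [bases rank3 simple] :=
  triangles_matroid coset_col_swap12 coset_col_swap23 coset_col_trans coset_matroid_neq0.
by split=> //; exact: coset_matroid_invariant.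
Qed.

End CosetCollinearity.

Section MatroidRelation.
Variables (gT : finGroupType) (G H : {group gT}) (Bs : {set {set {set gT}}}).
Hypothesis validBs : simple_rank3_invariant_matroid G H Bs.

Definition matroid_relation : {set {set gT} * {set gT}} :=
  [set p in setX (punctured G H) (punctured G H) |
     (p.1 == p.2) || ([set (H : {set gT}); p.1; p.2] \notin Bs)].

Lemma matroid_relationE a b : ((a, b) \in matroid_relation) =
  [&& a \in punctured G H, b \in punctured G H &
      (a == b) || ([set (H : {set gT}); a; b] \notin Bs)].
Proof. by rewrite inE in_setX andbA. Qed.

Lemma matroid_relation_equiv : equiv_on (punctured G H) matroid_relation.
Proof.
have [bases rank3 simple _] := validBs.
split.
- by apply/subsetP => -[a b]; rewrite matroid_relationE in_setX => /and3P[-> -> _].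
- by move=> a aD; rewrite matroid_relationE aD eqxx.
- by move=> a b; rewrite !matroid_relationE eq_sym set3C23 => /and3P[-> -> ->].
move=> x y z; rewrite !matroid_relationE => /and3P[xD yD /orP[/eqP-> // | Rxy]].
case/and3P=> _ zD /orP[/eqP<- | Ryz]; first by rewrite xD yD Rxy orbT.
rewrite xD zD /=; apply/orP; right.
have /setD1P[yH yX] := yD.
apply: (rank3_nonbasis_trans bases rank3 simple (ground_base G H) yX _ Rxy Ryz).
by rewrite eq_sym.
Qed.

Lemma base_set3_translate g x y z : g \in G -> x = g *: H ->
  ([set (H : {set gT}); g^-1 *: y; g^-1 *: z] \in Bs) = ([set x; y; z] \in Bs).
Proof.
have [_ _ _ invBs] := validBs.
by move=> gG ex; rewrite -(G_invariant_set3 _ _ _ invBs (groupVr gG)) ex lcosetK.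
Qed.

Lemma punctured_translate g y : g \in G -> y \in ground G H -> y != g *: H ->
  g^-1 *: y \in punctured G H.
Proof.
move=> gG yX ygH; rewrite in_setD1 ground_act ?groupV // andbT.
by apply: contra ygH => /eqP <-; rewrite lcosetKV.
Qed.

Lemma matroid_relation_nontrivial : nontrivial_equiv (punctured G H) matroid_relation.
Proof.
apply/(nontrivial_equivP matroid_relation_equiv).
have [[/set0Pn[B BBs] sBX _] rank3 _ _] := validBs.
have [x [y [z [xy xz yz eB]]]] := cards3P (rank3 B BBs).
have [xX yX zX] : [/\ x \in ground G H, y \in ground G H & z \in ground G H].
  by split; apply: (subsetP (sBX B BBs)); rewrite eB !inE eqxx ?orbT.
have /lcosetsP[g gG ex] := xX.
have [yD zD] : g^-1 *: y \in punctured G H /\ g^-1 *: z \in punctured G H.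
  by split; apply: punctured_translate; rewrite // -ex eq_sym.
exists (g^-1 *: y), (g^-1 *: z); split=> //.
rewrite matroid_relationE yD zD /= (base_set3_translate _ _ gG ex) -eB BBs orbF.
by apply: contra yz => /eqP/lcoset_inj ->.
Qed.

Lemma matroid_relation_inv a b : a \in G -> b \in G ->
  (a *: H, b *: H) \in matroid_relation -> a *: H != b *: H ->
  (a^-1 *: H, (a^-1 * b) *: H) \in matroid_relation.
Proof.
move=> aG bG; rewrite !matroid_relationE => /and3P[/setD1P[aH _] _ nb] ab.
rewrite (negbTE ab) /= in nb; rewrite lcosetM.
have H_aH : (H : {set gT}) != a *: H by rewrite eq_sym.
have bH_aH : b *: H != a *: H by rewrite eq_sym.
have [HX bHX] := (ground_base G H, ground_act bG (ground_base G H)).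
by rewrite !punctured_translate //= (base_set3_translate _ _ aG erefl) set3C12 nb orbT.
Qed.

Lemma matroid_relation_stab h x y : h \in G -> h *: H = H ->
  (x, y) \in matroid_relation -> (h *: x, h *: y) \in matroid_relation.
Proof.
have [_ _ _ invBs] := validBs.
move=> hG hH; rewrite !matroid_relationE => /and3P[/setD1P[xH xX] /setD1P[yH yX] xy].
have move_H (u : {set gT}) : u != H -> h *: u != H.
  by apply: contra => /eqP hu; rewrite -(lcosetK h u) hu -{1}hH lcosetK.
rewrite !in_setD1 !move_H ?ground_act //= (inj_eq (@lcoset_inj _ h)).
by rewrite -{1}hH (G_invariant_set3 _ _ _ invBs hG).
Qed.

Lemma matroid_relation_admissible : H \subset G ->
  admissible_relation G H matroid_relation.
Proof.
move=> sHG; split.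
- exact: matroid_relation_equiv.
- exact: matroid_relation_nontrivial.
- exact: matroid_relation_inv.
move=> a b h aG bG hH; rewrite !lcosetM.
by apply: matroid_relation_stab; [exact: (subsetP sHG) | exact: lcoset_id].
Qed.

Lemma coset_col_matroid_relation x y z :
  x \in ground G H -> y \in ground G H -> z \in ground G H ->
  x != y -> x != z -> y != z ->
  coset_col G H matroid_relation x y z = ([set x; y; z] \notin Bs).
Proof.
move=> xX yX zX xy xz yz; have /lcosetsP[g gG ex] := xX.
have [yx zx] : y != x /\ z != x by rewrite !(eq_sym _ x).
have rel_rep k : k \in G -> x = k *: H ->
    ((k^-1 *: y, k^-1 *: z) \in matroid_relation) = ([set x; y; z] \notin Bs).
  move=> kG ek; rewrite matroid_relationE (base_set3_translate _ _ kG ek).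
  by rewrite !punctured_translate -?ek //= (inj_eq (@lcoset_inj _ k^-1)) (negbTE yz).
apply/forall_inP/idP => [/(_ g gG) | nb k kG]; first by rewrite {1}ex eqxx (rel_rep g).
by apply/implyP => /eqP ek; rewrite rel_rep.
Qed.

End MatroidRelation.

Section Correspondence.
Variables (gT : finGroupType) (G H : {group gT}).

Lemma matroid_relation_coset_matroid R : admissible_relation G H R ->
  matroid_relation G H (coset_matroid G H R) = R.
Proof.
move=> admR; have [[_ Rrefl _ _] _ _ _] := admR.
apply/setP => -[a b]; rewrite matroid_relationE.
apply/idP/idP => [/and3P[aD bD] | ab].
  by have [-> | neq] := eqVneq a b; rewrite ?Rrefl //= coset_matroid_base ?negbK.
have [aD bD] := admissible_sub admR ab; rewrite aD bD /=.
by have [//| neq] := eqVneq a b; rewrite coset_matroid_base ?ab.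
Qed.

Lemma coset_matroid_relation Bs : H \subset G -> simple_rank3_invariant_matroid G H Bs ->
  coset_matroid G H (matroid_relation G H Bs) = Bs.
Proof.
move=> sHG validBs; have admR := matroid_relation_admissible validBs sHG.
have [[_ sBX _] rank3 _ _] := validBs.
have [col12 col23] := (coset_col_swap12 admR, coset_col_swap23 admR).
apply/setP => S; apply/idP/idP => [St | SBs].
  have [x [y [z [xy xz yz eS]]]] := triangleP col12 col23 St.
  have [xX yX zX] : [/\ x \in ground G H, y \in ground G H & z \in ground G H].
    by split; apply: (subsetP (triangle_subset St)); rewrite eS !inE eqxx ?orbT.
  by rewrite coset_col_matroid_relation // negbK -eS.
have [x [y [z [xy xz yz eS]]]] := cards3P (rank3 S SBs).
have [xX yX zX] : [/\ x \in ground G H, y \in ground G H & z \in ground G H].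
  by split; apply: (subsetP (sBX S SBs)); rewrite eS !inE eqxx ?orbT.
by rewrite eS (trianglesE col12 col23) // coset_col_matroid_relation // -eS SBs.
Qed.

End Correspondence.

Theorem proposition3p9 (gT : finGroupType) (G H : {group gT}) :
  H \proper G -> 3 <= #|G : H| ->
  exists f : {set {set {set gT}}} -> {set {set gT} * {set gT}},
    (forall Bs, simple_rank3_invariant_matroid G H Bs ->
       admissible_relation G H (f Bs)) /\
    (forall Bs1 Bs2, simple_rank3_invariant_matroid G H Bs1 ->
       simple_rank3_invariant_matroid G H Bs2 -> f Bs1 = f Bs2 -> Bs1 = Bs2) /\
    (forall R, admissible_relation G H R ->
       exists2 Bs, simple_rank3_invariant_matroid G H Bs & f Bs = R).
Proof.
(* The index bound is not needed: for index at most 2 both sides are empty. *)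
move=> /proper_sub sHG _; exists (matroid_relation G H); split; [|split].
- by move=> Bs validBs; exact: matroid_relation_admissible.
- move=> Bs1 Bs2 valid1 valid2 eq_rel.
  by rewrite -(coset_matroid_relation sHG valid1) eq_rel coset_matroid_relation.
- move=> R admR; exists (coset_matroid G H R); first exact: coset_matroid_valid.
  exact: matroid_relation_coset_matroid.
Qed.
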